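(* Let $(G,a,b)$ be a linear interval strip. Then every vertex $v\in N_G(a)$ satisfies $\deg_{G^2}(v)\le 3\omega(G)-3$.
   Context: A linear interval graph is obtained by taking a line $\Sigma$, intervals $F_1,\dots,F_k\subseteq\Sigma$ each homeomorphic to $[0,1]$, a finite set of points of $\Sigma$ as vertex set, and joining two points iff both lie in some $F_i$. A linear interval strip is a triple $(G,v_1,v_n)$ where $G$ is a linear interval graph admitting such a representation in which the vertices in order along the line are $v_1,\dots,v_n$ (so the ends are the leftmost and rightmost vertices). $G^2$ is the graph on $V(G)$ with distinct vertices adjacent iff at distance at most $2$ in $G$. $\omega$ is the clique number. *)

From HB Require Import structures.
From mathcomp Require Import all_boot all_order all_algebra.
Set Implicit Arguments. Unset Strict Implicit. Unset Printing Implicit Defensive.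
Import Order.TTheory GRing.Theory Num.Theory.

(* A representation of (e, a, b) as a linear interval strip, with the line
   Sigma modelled by an ordered field R: vertices are distinct points pos v,
   the intervals F_i = [l_i, r_i] (l_i < r_i, i.e. homeomorphic to [0,1]) are
   the entries of Fs, two distinct vertices are adjacent iff both lie in some
   F_i, and a (resp. b) is the leftmost (resp. rightmost) vertex. *)
Definition lin_interval_strip_rep (R : realFieldType) (T : finType) (e : rel T)
    (a b : T) (pos : T -> R) (Fs : seq (R * R)) : Prop :=
  [/\ injective pos,
      all (fun I : R * R => (I.1 < I.2)%R) Fs,
      (forall x y : T, e x y =
         (x != y) && has (fun I : R * R =>
           [&& (I.1 <= pos x)%R, (pos x <= I.2)%R,
               (I.1 <= pos y)%R & (pos y <= I.2)%R]) Fs),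
      (forall v : T, (pos a <= pos v)%R) &
      (forall v : T, (pos v <= pos b)%R)].

Definition is_lin_interval_strip (R : realFieldType) (T : finType) (e : rel T)
    (a b : T) : Prop :=
  exists (pos : T -> R) (Fs : seq (R * R)), lin_interval_strip_rep e a b pos Fs.

Definition is_clique (T : finType) (e : rel T) (Q : {set T}) : bool :=
  [forall x in Q, forall y in Q, (x != y) ==> e x y].

Definition clique_number (T : finType) (e : rel T) : nat :=
  \max_(Q : {set T} | is_clique e Q) #|Q|.

Definition sq_adj (T : finType) (e : rel T) (x y : T) : bool :=
  (x != y) && (e x y || [exists u, e x u && e u y]).

Definition deg_sq (T : finType) (e : rel T) (v : T) : nat :=
  #|[set w | sq_adj e v w]|.

From HB Require Import structures.
From mathcomp Require Import all_boot all_order all_algebra.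
From mathcomp Require Import zify.
Import Order.TTheory GRing.Theory Num.Theory.
Set Implicit Arguments. Unset Strict Implicit.

(* Let u1 be the rightmost vertex of N[v] and u2 the rightmost vertex of
   N[u1].  The vertices lying between two adjacent vertices form a clique, so
   [a, v], [v, u1] and [u1, u2] are cliques; the first two share v, the last
   two share u1.  Every vertex at distance at most 2 from v lies in [a, u2]:
   if v - u - w with w right of u1, then u1 lies between u and w, hence is
   adjacent to w, so w is not right of u2.  Thus the square-neighbourhood
   of v has at most 3 omega - 2 - 1 vertices (v itself excluded). *)

Lemma card_chainU3 (T : finType) (A B C : {set T}) (x y : T) :
  x \in A :&: B -> y \in B :&: C -> (#|A :|: B :|: C| + 2 <= #|A| + #|B| + #|C|)%N.
Proof.
move=> xAB yBC.
have AB_gt0 : (0 < #|A :&: B|)%N by apply/card_gt0P; exists x.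
have ABC_gt0 : (0 < #|(A :|: B) :&: C|)%N.
  by apply/card_gt0P; exists y; move: yBC; rewrite !inE => /andP[-> ->]; rewrite orbT.
have := cardsUI A B; have := cardsUI (A :|: B) C; lia.
Qed.

Section LinearIntervalStrip.
Variables (R : realFieldType) (T : finType) (e : rel T) (a b : T)
  (pos : T -> R) (Fs : seq (R * R)).
Hypothesis rep : lin_interval_strip_rep e a b pos Fs.
Local Open Scope ring_scope.

Definition seg (x y : T) : {set T} := [set w | pos x <= pos w <= pos y].

Lemma seg_split x y z : pos x <= pos y -> pos y <= pos z ->
  seg x z = seg x y :|: seg y z.
Proof.
move=> xy yz; apply/setP => w; rewrite !inE.
case: (leP (pos w) (pos y)) => [wy | yw]; rewrite /= ?andbT ?andbF ?orbF.
- by rewrite (le_trans wy yz) andbT orb_idr // => /andP[/(le_trans xy) ->].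
- by rewrite (ltW yw) (le_trans xy (ltW yw)).
Qed.

Lemma seg_clique x y : x = y \/ e x y -> is_clique e (seg x y).
Proof.
case: rep => pos_inj _ adjE _ _ xy.
apply/forallP => w; apply/implyP; rewrite inE => /andP[xw wy].
apply/forallP => w'; apply/implyP; rewrite inE => /andP[xw' wy'].
apply/implyP => ww'; case: xy => [xy | exy].
  subst y; case/eqP: ww'; apply: pos_inj.
  by apply/eqP; rewrite eq_le (le_trans wy xw') (le_trans wy' xw).
move: exy; rewrite adjE => /andP[_ /hasP[I FsI /and4P[Ix xI Iy yI]]].
rewrite adjE ww'; apply/hasP; exists I => //.
by rewrite (le_trans Ix xw) (le_trans wy yI) (le_trans Ix xw') (le_trans wy' yI).
Qed.

Lemma card_seg_le x y : x = y \/ e x y -> (#|seg x y| <= clique_number e)%N.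
Proof.
move=> xy; apply: (leq_bigmax_cond (F := fun Q : {set T} => #|Q|)).
exact: seg_clique.
Qed.

Lemma adj_between u w z : e u w -> pos u <= pos z <= pos w -> z != w -> e z w.
Proof.
move=> uw /andP[uz zw] nzw.
have /forallP/(_ z)/implyP := seg_clique (or_intror uw).
rewrite inE uz zw => /(_ isT)/forallP/(_ w)/implyP.
by rewrite inE (le_trans uz zw) lexx => /(_ isT)/implyP/(_ nzw).
Qed.

Definition rightmost_nbr (v : T) : T :=
  Order.arg_max v (fun w => (w == v) || e v w) pos.

Lemma rightmost_nbr_adj v : v = rightmost_nbr v \/ e v (rightmost_nbr v).
Proof.
rewrite /rightmost_nbr; case: arg_maxP => [|u /orP[/eqP -> | vu] _].
- by rewrite eqxx.
- by left.
- by right.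
Qed.

Lemma le_rightmost_nbr v w : (w == v) || e v w -> pos w <= pos (rightmost_nbr v).
Proof.
by rewrite /rightmost_nbr; case: arg_maxP => [|u _ ]; [rewrite eqxx | apply].
Qed.

Lemma sq_adj_le_rightmost_nbr2 v w :
  sq_adj e v w -> pos w <= pos (rightmost_nbr (rightmost_nbr v)).
Proof.
set u1 := rightmost_nbr v.
have u1u2 : pos u1 <= pos (rightmost_nbr u1) by rewrite le_rightmost_nbr ?eqxx.
case/andP=> _ /orP[vw | /existsP[u /andP[vu uw]]].
  by rewrite (le_trans _ u1u2) // le_rightmost_nbr ?vw ?orbT.
case: (leP (pos w) (pos u1)) => [wu1 | u1w]; first exact: le_trans wu1 u1u2.
apply: le_rightmost_nbr; apply/orP; right; apply: (adj_between uw).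
  by rewrite (ltW u1w) le_rightmost_nbr ?vu ?orbT.
by apply: contraTneq u1w => ->; rewrite ltxx.
Qed.

Lemma deg_sq_le_clique3 v : e a v -> (deg_sq e v <= 3 * clique_number e - 3)%N.
Proof.
case: rep => _ _ _ a_min _ av.
set u1 := rightmost_nbr v; set u2 := rightmost_nbr u1.
have vu1 : pos v <= pos u1 by rewrite le_rightmost_nbr ?eqxx.
have u1u2 : pos u1 <= pos u2 by rewrite le_rightmost_nbr ?eqxx.
have sq_sub : [set w | sq_adj e v w] \subset seg a u2 :\ v.
  apply/subsetP => w; rewrite !inE => vw; rewrite a_min sq_adj_le_rightmost_nbr2 //.
  by case/andP: vw; rewrite eq_sym => ->.
have vC1 : v \in seg a v :&: seg v u1 by rewrite !inE a_min lexx vu1.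
have u1C2 : u1 \in seg v u1 :&: seg u1 u2 by rewrite !inE lexx vu1 u1u2.
have := card_chainU3 vC1 u1C2; rewrite -seg_split // -seg_split ?(le_trans vu1) //.
have := cardsD1 v (seg a u2); rewrite !inE a_min (le_trans vu1 u1u2) /=.
have := subset_leq_card sq_sub; rewrite -/(deg_sq e v).
have : (#|seg a v| <= clique_number e)%N := card_seg_le (or_intror av).
have : (#|seg v u1| <= clique_number e)%N := card_seg_le (rightmost_nbr_adj v).
have : (#|seg u1 u2| <= clique_number e)%N := card_seg_le (rightmost_nbr_adj u1).
lia.
Qed.

End LinearIntervalStrip.

Theorem mainTheorem10 (R : realFieldType) (T : finType) (e : rel T) (a b : T) :
  is_lin_interval_strip R e a b ->
  forall v : T, e a v -> deg_sq e v <= 3 * clique_number e - 3.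
Proof. move=> [pos [Fs rep]] v; exact: (deg_sq_le_clique3 rep). Qed.
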